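(* For every integer $n \geq 3$, $\gamma_{b,2}(C_3 \square C_n) = \left\lceil \frac{2n}{3} \right\rceil$.
   Context: For a graph $G$, a $2$-limited broadcast is a function $f: V(G) \to \{0,1,2\}$. A vertex $u$ hears the broadcast from $v$ if $f(v) > 0$ and $d(u,v) \leq f(v)$, where $d$ is the distance in $G$. The broadcast $f$ is dominating if every vertex of $G$ hears the broadcast from some vertex. The cost of $f$ is $\sum_{v \in V(G)} f(v)$. The $2$-limited broadcast domination number $\gamma_{b,2}(G)$ is the minimum cost of a $2$-limited dominating broadcast on $G$. $C_n$ denotes the cycle on $n$ vertices, $P_n$ the path on $n$ vertices, and $\square$ the Cartesian product of graphs. *)

From mathcomp Require Import all_boot.
Set Implicit Arguments. Unset Strict Implicit. Unset Printing Implicit Defensive.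

Definition dist_le (T : finType) (g : rel T) (k : nat) (u v : T) : Prop :=
  exists p : seq T, [/\ path g u p, last u p = v & size p <= k].

Definition broadcast2 (T : finType) := {ffun T -> 'I_3}.

Definition hears (T : finType) (g : rel T) (f : broadcast2 T) (u v : T) : Prop :=
  0 < f v /\ dist_le g (f v) u v.

Definition dominating2 (T : finType) (g : rel T) (f : broadcast2 T) : Prop :=
  forall u : T, exists v : T, hears g f u v.

Definition cost2 (T : finType) (f : broadcast2 T) : nat := \sum_(v : T) (f v : nat).

Definition is_gamma_b2 (T : finType) (g : rel T) (c : nat) : Prop :=
  (exists f : broadcast2 T, dominating2 g f /\ cost2 f = c) /\
  (forall f : broadcast2 T, dominating2 g f -> c <= cost2 f).

Definition cycle_rel (n : nat) : rel 'I_n :=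
  fun i j => (j == (i.+1 %% n) :> nat) || (i == (j.+1 %% n) :> nat).

Definition cart_rel (A B : finType) (g : rel A) (h : rel B) : rel (A * B) :=
  fun x y => ((x.1 == y.1) && h x.2 y.2) || ((x.2 == y.2) && g x.1 y.1).
Arguments cycle_rel n : clear implicits.

(** Lower bound: view the product as n columns, each a copy of C_3.  A
    strength-2 broadcaster is heard by every vertex of its own column and of
    the two neighbouring columns.  A column that is not that close to such a
    "strong" column and contains no strength-1 broadcaster is "poor": each of
    its three vertices must then be heard, in its own row, from a strength-1
    broadcaster in an adjacent column or from a strength-2 broadcaster two
    columns away.  A discharging scheme in which every column receives at
    least 4 while no column pays more than 6 times its own cost gives
    [4 n <= 6 cost], i.e. [cost >= 2n/3].

    Upper bound: broadcast with strength 2 from row 0 of every column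
    congruent to 1 modulo 3, and with strength 1 from row 0 of the last column
    when n is congruent to 1 modulo 3. *)

From mathcomp Require Import all_boot zify.
Set Implicit Arguments. Unset Strict Implicit. Unset Printing Implicit Defensive.

Section Walks.

Variables (T : finType) (g : rel T).

Lemma dist_le_refl k u : dist_le g k u u.
Proof. by exists [::]. Qed.

Lemma dist_le_edge u v : g u v -> dist_le g 1 u v.
Proof. by exists [:: v]; rewrite /= andbT. Qed.

Lemma dist_le_mono k l u v : k <= l -> dist_le g k u v -> dist_le g l u v.
Proof. by move=> kl [p [gp pv pk]]; exists p; split=> //; apply: leq_trans kl. Qed.

Lemma dist_le_trans k l u w v :
  dist_le g k u w -> dist_le g l w v -> dist_le g (k + l) u v.
Proof.
move=> [p [gp pw pk]] [q [gq qv ql]]; exists (p ++ q).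
by rewrite cat_path last_cat size_cat pw gp gq qv leq_add.
Qed.

Lemma dist_le0 u v : dist_le g 0 u v -> v = u.
Proof. by case=> -[|w p] [_ <-]. Qed.

Lemma dist_leS k u v :
  dist_le g k.+1 u v -> v = u \/ exists2 w, g u w & dist_le g k w v.
Proof.
case=> -[|w p] [/= + pv pk]; first by left.
by case/andP=> uw wp; right; exists w => //; exists p.
Qed.

Lemma hearsW (f : broadcast2 T) k u v :
  0 < k <= f v -> dist_le g k u v -> hears g f u v.
Proof. by case/andP=> k_gt0 kf /(dist_le_mono kf); split=> //; apply: leq_trans kf. Qed.

End Walks.

Lemma dist_le_cart (A B : finType) (g : rel A) (h : rel B) k (x y : A * B) :
  dist_le (cart_rel g h) k x y ->
  exists k1 k2, [/\ k1 + k2 <= k, dist_le g k1 x.1 y.1 & dist_le h k2 x.2 y.2].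
Proof.
case=> p [+ <- +]; elim: p k x => [|z p IHp] k x /=.
  by move=> _ _; exists 0, 0; split=> //; apply: dist_le_refl.
case/andP=> xz zp; case: k => // k /(IHp _ _ zp) [k1 [k2 [k12 d1 d2]]].
case/orP: xz => /andP[/eqP e1 e2].
- exists k1, k2.+1; rewrite e1; split=> //; first by rewrite addnS.
  exact: (dist_le_trans (dist_le_edge e2) d2).
- exists k1.+1, k2; rewrite e1; split=> //.
  exact: (dist_le_trans (dist_le_edge e2) d1).
Qed.

Lemma cost2_pair (A B : finType) (f : broadcast2 (A * B)%type) :
  cost2 f = \sum_(j : B) \sum_(a : A) (f (a, j) : nat).
Proof. by rewrite exchange_big pair_bigA; apply: eq_bigr => -[]. Qed.

Lemma ord3_eq1 (x : 'I_3) : 0 < x -> x != 2 :> nat -> x = 1 :> nat.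
Proof. by case: x => -[|[|[]]]. Qed.

Section Cycle.

Variable n : nat.
Local Notation next := (@ordS n).
Local Notation prev := (@ord_pred n).

Lemma cycle_relE (i j : 'I_n) : cycle_rel n i j = (j == next i) || (j == prev i).
Proof.
rewrite /cycle_rel; congr orb.
rewrite -[_ %% n]/(val (next j)) val_eqE.
by apply/eqP/eqP=> ->; rewrite ?ordSK ?ord_predK.
Qed.

Lemma dist_le_cycle1 (i j : 'I_n) :
  dist_le (cycle_rel n) 1 i j -> [\/ j = i, j = next i | j = prev i].
Proof.
case/dist_leS=> [->|[w]]; first by constructor 1.
by rewrite cycle_relE => /orP[] /eqP-> /dist_le0->; [constructor 2 | constructor 3].
Qed.

Lemma dist_le_cycle2 (i j : 'I_n) :
  dist_le (cycle_rel n) 2 i j ->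
  [\/ dist_le (cycle_rel n) 1 i j, j = next (next i) | j = prev (prev i)].
Proof.
case/dist_leS=> [->|[w]]; first by constructor 1; apply: dist_le_refl.
rewrite cycle_relE => /orP[] /eqP-> /dist_le_cycle1[]->.
- by constructor 1; apply: dist_le_edge; rewrite cycle_relE eqxx.
- by constructor 2.
- by constructor 1; rewrite ordSK; apply: dist_le_refl.
- by constructor 1; apply: dist_le_edge; rewrite cycle_relE eqxx orbT.
- by constructor 1; rewrite ord_predK; apply: dist_le_refl.
- by constructor 3.
Qed.

Lemma sum_prev (F : 'I_n -> nat) : \sum_(j < n) F (prev j) = \sum_(j < n) F j.
Proof. by rewrite [RHS](reindex_inj (@ord_pred_inj n)). Qed.

Lemma sum_next (F : 'I_n -> nat) : \sum_(j < n) F (next j) = \sum_(j < n) F j.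
Proof. by rewrite [RHS](reindex_inj (@ordS_inj n)). Qed.

Lemma val_ordS (j : 'I_n) : j.+1 < n -> next j = j.+1 :> nat.
Proof. by move=> lt_jn /=; rewrite modn_small. Qed.

Lemma val_ord_pred (j : 'I_n) : 0 < j -> prev j = j.-1 :> nat.
Proof.
move=> j_gt0 /=; have -> : (j + n).-1 = j.-1 + n by lia.
by rewrite modnDr modn_small //; have := ltn_ord j; lia.
Qed.

End Cycle.

Section Grid.

Variable n : nat.
Local Notation grid := (cart_rel (cycle_rel 3) (cycle_rel n)).
Local Notation vertex := ('I_3 * 'I_n)%type.
Local Notation next := (@ordS n).
Local Notation prev := (@ord_pred n).

Lemma grid_to_row0 (b : 'I_3) (j : 'I_n) : dist_le grid 1 (b, j) (ord0, j).
Proof.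
have [-> | b_ne0] := eqVneq b ord0; first exact: dist_le_refl.
apply: dist_le_edge; rewrite /cart_rel eqxx /=.
by move: b_ne0; case: b => -[|[|[]]].
Qed.

Lemma grid_next (a : 'I_3) (j : 'I_n) : dist_le grid 1 (a, j) (a, next j).
Proof. by apply: dist_le_edge; rewrite /cart_rel eqxx cycle_relE eqxx. Qed.

Lemma grid_prev (a : 'I_3) (j : 'I_n) : dist_le grid 1 (a, j) (a, prev j).
Proof. by apply: dist_le_edge; rewrite /cart_rel eqxx cycle_relE eqxx orbT. Qed.

Lemma hears_grid (f : broadcast2 vertex) (b : 'I_3) (j : 'I_n) (v : vertex) :
  hears grid f (b, j) v ->
  [\/ v.2 = j,
      f v = 2 :> nat /\ (v.2 = next j \/ v.2 = prev j),
      v = (b, next j) \/ v = (b, prev j) |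
      f v = 2 :> nat /\ (v = (b, next (next j)) \/ v = (b, prev (prev j)))].
Proof.
case=> fv_gt0 /dist_le_cart[k1 [k2 [k12 /= dc di]]]; have fv_lt3 := ltn_ord (f v).
(* Restated so that [lia] sees the same term [f v] as in [fv_lt3]; as produced
   by [hears], it is elaborated at a different but convertible type. *)
have {}k12 : k1 + k2 <= f v := k12.
have [k2_0 | k2_gt0] := posnP k2.
  by move: di; rewrite k2_0 => /dist_le0 ->; constructor 1.
have near : (v.1 = b \/ f v = 2 :> nat) /\ dist_le (cycle_rel n) 1 j v.2 \/
    [/\ v.1 = b, f v = 2 :> nat & v.2 = next (next j) \/ v.2 = prev (prev j)].
  have [k2_le1 | k2_eq2] : k2 <= 1 \/ k2 = 2 by lia.
    left; split; last exact: dist_le_mono k2_le1 di.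
    have [k1_0 | k1_gt0] := posnP k1; last by right; lia.
    by left; move: dc; rewrite k1_0 => /dist_le0.
  have [fv2 k1_0] : f v = 2 :> nat /\ k1 = 0 by lia.
  move: dc di; rewrite k1_0 k2_eq2 => /dist_le0 cb /dist_le_cycle2[d1 | ei | ei].
  - by left; split; first left.
  - by right; split=> //; left.
  - by right; split=> //; right.
move: near; clear; case: v => c i /= [[[-> | fv2] /dist_le_cycle1[] ei] | [-> fv2 [] ei]];
  subst i.
- by constructor 1.
- by constructor 3; left.
- by constructor 3; right.
- by constructor 1.
- by constructor 2; split=> //; left.
- by constructor 2; split=> //; right.
- by constructor 4; split=> //; left.
- by constructor 4; split=> //; right.
Qed.

Variable f : broadcast2 vertex.

Definition col_count k (i : 'I_n) := \sum_(b < 3) (f (b, i) == k :> nat).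

Lemma col_count_eq0 k i b : col_count k i = 0 -> f (b, i) != k :> nat.
Proof. by move/eqP; rewrite sum_nat_eq0 => /forallP/(_ b) /=; case: (_ == k). Qed.

Lemma column_cost i : \sum_(b < 3) (f (b, i) : nat) = 2 * col_count 2 i + col_count 1 i.
Proof.
rewrite /col_count big_distrr -big_split; apply: eq_bigr => b _ /=.
by case: (f (b, i)) => -[|[|[]]].
Qed.

Definition strong i := 0 < col_count 2 i.
Definition covered i := [|| strong (prev i), strong i | strong (next i)].
Definition poor i := ~~ covered i && (col_count 1 i == 0).

Lemma poor_not_strong j :
  poor j -> [&& ~~ strong (prev j), ~~ strong j & ~~ strong (next j)].
Proof. by case/andP; rewrite /covered !negb_or. Qed.

(* A strong column pays 4 to itself and to each neighbour, and 6 per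
   additional strength-2 vertex to each poor column at distance 2.  A column
   with y > 0 strength-1 vertices keeps 4 if it is not covered and pays
   3y - 2 to each poor neighbour; if it is covered, only one neighbour can be
   poor, and it gets 6y. *)
Definition share i := if strong i then 4 else 0.
Definition self_charge i := if ~~ covered i && (0 < col_count 1 i) then 4 else 0.
Definition charge_next i :=
  if poor (next i) && (0 < col_count 1 i) then
    (if covered i then 6 * col_count 1 i else 3 * col_count 1 i - 2)
  else 0.
Definition charge_prev i :=
  if poor (prev i) && (0 < col_count 1 i) then
    (if covered i then 6 * col_count 1 i else 3 * col_count 1 i - 2)
  else 0.
Definition charge_next2 i :=
  if poor (next (next i)) && strong i then 6 * (col_count 2 i - 1) else 0.
Definition charge_prev2 i :=
  if poor (prev (prev i)) && strong i then 6 * (col_count 2 i - 1) else 0.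

Definition paid i :=
  3 * share i + self_charge i + charge_next i + charge_prev i
  + charge_next2 i + charge_prev2 i.
Definition received j :=
  share (prev j) + share j + share (next j) + self_charge j
  + charge_next (prev j) + charge_prev (next j)
  + charge_next2 (prev (prev j)) + charge_prev2 (next (next j)).

Lemma sum_received : \sum_(j < n) received j = \sum_(i < n) paid i.
Proof.
rewrite /received /paid !big_split /= !sum_prev !sum_next.
rewrite (sum_prev (fun i => charge_next2 (prev i))).
rewrite (sum_next (fun i => charge_prev2 (next i))).
by rewrite !sum_prev !sum_next big1_eq addn0 !addnA.
Qed.

Lemma paid_le i : paid i <= 6 * (2 * col_count 2 i + col_count 1 i).
Proof.
have := @poor_not_strong (next i); have := @poor_not_strong (prev i).
rewrite /paid /share /self_charge /charge_next /charge_prev /charge_next2 /charge_prev2.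
rewrite /covered ordSK ord_predK /strong.
case: (poor (next i)) (poor (prev i)) (poor (next (next i))) (poor (prev (prev i)))
  => [] [] [] [] /=;
case: (ltnP 0 (col_count 2 i)) (ltnP 0 (col_count 1 i)) => [] ? [] ?;
case: (0 < col_count 2 (prev i)) (0 < col_count 2 (next i)) => [] [] //=; lia.
Qed.

Hypothesis f_dominating : dominating2 grid f.

Lemma poor_row j b : poor j ->
  [|| f (b, prev (prev j)) == 2 :> nat, f (b, prev j) == 1 :> nat,
      f (b, next j) == 1 :> nat | f (b, next (next j)) == 2 :> nat].
Proof.
move=> pj; have /eqP y0 : col_count 1 j == 0 by case/andP: pj.
have := poor_not_strong pj; rewrite /strong !lt0n !negbK.
case/and3P=> /eqP x_prev /eqP x0 /eqP x_next.
have [[c i] hv] := f_dominating (b, j).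
have fv_gt0 : 0 < f (c, i) by case: hv.
case: (hears_grid hv) => /= [ei | [fv2 [ei | ei]] | [[eb ei] | [eb ei]] | [fv2 [[eb ei] | [eb ei]]]];
  subst.
- by move: (col_count_eq0 c y0); rewrite (ord3_eq1 fv_gt0 (col_count_eq0 c x0)).
- by move: (col_count_eq0 c x_next); rewrite fv2.
- by move: (col_count_eq0 c x_prev); rewrite fv2.
- by rewrite (ord3_eq1 fv_gt0 (col_count_eq0 b x_next)) eqxx !orbT.
- by rewrite (ord3_eq1 fv_gt0 (col_count_eq0 b x_prev)) eqxx orbT.
- by rewrite fv2 !orbT.
- by rewrite fv2.
Qed.

Lemma poor_support j : poor j ->
  3 <= col_count 2 (prev (prev j)) + col_count 1 (prev j)
       + col_count 1 (next j) + col_count 2 (next (next j)).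
Proof.
move=> pj; rewrite /col_count -!big_split /=.
apply: (@leq_trans (\sum_(b < 3) 1)); first by rewrite sum_nat_const card_ord.
by apply: leq_sum => b _; case/or4P: (poor_row b pj) => /eqP->; rewrite eqxx; lia.
Qed.

Lemma received_ge4 j : 4 <= received j.
Proof.
rewrite /received; case cov: (covered j).
  by move: cov; rewrite /covered /share => /or3P[] ->; lia.
have [y0 | y_gt0] := posnP (col_count 1 j); last first.
  by rewrite /self_charge cov y_gt0 /=; lia.
have pj : poor j by rewrite /poor cov y0.
have := poor_support pj; have /and3P[] := poor_not_strong pj.
rewrite /charge_next /charge_prev /charge_next2 /charge_prev2 /covered.
rewrite ?ordSK ?ord_predK pj /strong => /negbTE-> /negbTE-> /negbTE-> /=.
case: (ltnP 0 (col_count 2 (prev (prev j)))) (ltnP 0 (col_count 1 (prev j)))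
      (ltnP 0 (col_count 1 (next j))) (ltnP 0 (col_count 2 (next (next j))))
  => [] ? [] ? [] ? [] ? /=; lia.
Qed.

Lemma cost_lower_bound : (2 * n + 2) %/ 3 <= cost2 f.
Proof.
have received_total : 4 * n <= \sum_(j < n) received j.
  apply: (@leq_trans (\sum_(j < n) 4)); first by rewrite sum_nat_const card_ord mulnC.
  by apply: leq_sum => j _; apply: received_ge4.
have paid_total : \sum_(i < n) paid i <= 6 * cost2 f.
  rewrite cost2_pair big_distrr; apply: leq_sum => i _; rewrite column_cost; exact: paid_le.
by rewrite sum_received in received_total; lia.
Qed.

End Grid.

Section Construction.

Variable n : nat.
Local Notation vertex := ('I_3 * 'I_n)%type.

Definition optimal_strength (j : nat) : nat :=
  if j %% 3 == 1 then 2 else if (n %% 3 == 1) && (j == n.-1) then 1 else 0.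

Definition optimal_broadcast : broadcast2 vertex :=
  [ffun v : vertex => inord (if v.1 == ord0 then optimal_strength v.2 else 0)].

Lemma optimal_broadcastE b (j : 'I_n) :
  optimal_broadcast (b, j) = (if b == ord0 then optimal_strength j else 0) :> nat.
Proof.
rewrite ffunE inordK //=; case: ifP => // _.
by rewrite /optimal_strength; case: ifP => //; case: ifP.
Qed.

Lemma sum_optimal_strength N : N <= n ->
  \sum_(0 <= j < N) optimal_strength j = 2 * ((N + 1) %/ 3) + ((n %% 3 == 1) && (n <= N)).
Proof.
elim: N => [|N IHN] le_Nn; first by rewrite big_nil; case: n le_Nn => [|n'] _ /=; rewrite ?andbF.
rewrite big_nat_recr //= IHN; last by lia.
rewrite /optimal_strength.
case: (eqVneq (N %% 3) 1) => N3; case: (eqVneq (n %% 3) 1) => n3;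
  case: (eqVneq N n.-1) => Nn; case: (leqP n N) => ?; case: (leqP n N.+1) => ?;
  rewrite /= ?andbT ?andbF; lia.
Qed.

Lemma cost_optimal_broadcast : cost2 optimal_broadcast = (2 * n + 2) %/ 3.
Proof.
have column j : \sum_(b < 3) (optimal_broadcast (b, j) : nat) = optimal_strength j.
  by rewrite big_ord_recl big1 => [|b _]; rewrite optimal_broadcastE ?addn0.
rewrite cost2_pair (eq_bigr _ (fun j _ => column j)).
rewrite -(big_mkord xpredT optimal_strength) sum_optimal_strength // leqnn andbT.
by case: eqVneq => /=; lia.
Qed.

Lemma optimal_broadcast_dominating :
  dominating2 (cart_rel (cycle_rel 3) (cycle_rel n)) optimal_broadcast.
Proof.
move=> [b j]; have lt_jn := ltn_ord j.
have strength2 (i : 'I_n) : i %% 3 = 1 -> optimal_broadcast (ord0, i) = 2 :> nat.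
  by move=> i3; rewrite optimal_broadcastE /optimal_strength i3.
have [j3 | j3] := eqVneq (j %% 3) 1.
  exists (ord0, j); apply: (@hearsW _ _ _ 2); first by rewrite strength2.
  exact: dist_le_mono (grid_to_row0 b j).
have [j3_2 | j3_2] := eqVneq (j %% 3) 2.
  have j_gt0 : 0 < j by case: (nat_of_ord j) j3_2.
  exists (ord0, ord_pred j); apply: (@hearsW _ _ _ 2).
    by rewrite strength2 // val_ord_pred //; lia.
  exact: dist_le_trans (grid_to_row0 b j) (grid_prev _ _).
have [lt_j1n | le_nj1] := ltnP j.+1 n.
  exists (ord0, ordS j); apply: (@hearsW _ _ _ 2).
    by rewrite strength2 // val_ordS //; lia.
  exact: dist_le_trans (grid_to_row0 b j) (grid_next _ _).
exists (ord0, j); apply: (@hearsW _ _ _ 1); last exact: grid_to_row0.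
rewrite optimal_broadcastE /optimal_strength (negbTE j3).
suff -> : (n %% 3 == 1) && (j == n.-1 :> nat) by [].
by apply/andP; split; apply/eqP; lia.
Qed.

End Construction.

(* The bound holds for every [n]. *)
Theorem theorem4p1 (n : nat) : 3 <= n ->
  is_gamma_b2 (cart_rel (cycle_rel 3) (cycle_rel n)) ((2 * n + 2) %/ 3).
Proof.
move=> _; split; last exact: cost_lower_bound.
exists (optimal_broadcast n).
by split; [exact: optimal_broadcast_dominating | exact: cost_optimal_broadcast].
Qed.
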